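(* There exists an infinite strongly 3-separating set $M_\infty\subseteq\mathbb{N}$ with $1\in M_\infty$.
   Context: $\mathbb{N}=\{1,2,3,\dots\}$. A set $M\subseteq\mathbb{N}$ is 3-separating if $|M|\geq 3$ and for any two triples $(m_1,m_2,m_3)$ and $(n_1,n_2,n_3)$, each consisting of three distinct elements of $M$, we have $n_2(m_3-m_1)=n_1(m_3-m_2)+n_3(m_2-m_1)$ if and only if $(m_1,m_2,m_3)=(n_1,n_2,n_3)$. A set $M$ is strongly 3-separating if it is 3-separating and moreover for any two pairs $(m_1,m_2)$, $(n_1,n_2)$, each consisting of two distinct elements of $M$, we have $m_1-m_2+n_2-n_1=0$ if and only if $(m_1,m_2)=(n_1,n_2)$. *)

From Stdlib Require Import ZArith.
Open Scope Z_scope.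

Definition subset_Npos (M : nat -> Prop) : Prop :=
  forall m : nat, M m -> (1 <= m)%nat.

Definition card_ge3 (M : nat -> Prop) : Prop :=
  exists a b c : nat, M a /\ M b /\ M c /\ a <> b /\ a <> c /\ b <> c.

Definition infinite_set (M : nat -> Prop) : Prop :=
  forall N : nat, exists m : nat, M m /\ (N < m)%nat.

Definition three_separating (M : nat -> Prop) : Prop :=
  card_ge3 M /\
  forall m1 m2 m3 n1 n2 n3 : nat,
    M m1 -> M m2 -> M m3 -> m1 <> m2 -> m1 <> m3 -> m2 <> m3 ->
    M n1 -> M n2 -> M n3 -> n1 <> n2 -> n1 <> n3 -> n2 <> n3 ->
    (Z.of_nat n2 * (Z.of_nat m3 - Z.of_nat m1)
       = Z.of_nat n1 * (Z.of_nat m3 - Z.of_nat m2)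
         + Z.of_nat n3 * (Z.of_nat m2 - Z.of_nat m1)
     <-> (m1, m2, m3) = (n1, n2, n3)).

Definition strongly_three_separating (M : nat -> Prop) : Prop :=
  three_separating M /\
  forall m1 m2 n1 n2 : nat,
    M m1 -> M m2 -> m1 <> m2 -> M n1 -> M n2 -> n1 <> n2 ->
    (Z.of_nat m1 - Z.of_nat m2 + Z.of_nat n2 - Z.of_nat n1 = 0
     <-> (m1, m2) = (n1, n2)).

(* Take M = { 4^e : e = 4^k - 1 }.  A sum of fewer than b powers of b determines its exponents
   as a multiset (base-b digits), so an equation between sums of three powers of 4 matches its
   exponents up to order.  Writing m_i = 4^e_i and n_i = 4^f_i, the separating equation becomes
   such an equation, with exponents f2+e3, f1+e2, f3+e1 on one side and f1+e3, f2+e1, f3+e2 on the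
   other; distinctness forces f1+e2 = f2+e1 and f2+e3 = f3+e2.  The exponent set {4^k - 1} is a
   Sidon set (again by uniqueness of base-4 digits), so f_i = e_i.  The pair condition is the
   two-term case of the same uniqueness. *)
From Stdlib Require Import ZArith Lia Arith List Permutation.
Import ListNotations.
Local Open Scope nat_scope.

Definition pow_sum (b : nat) (l : list nat) : nat := list_sum (map (Nat.pow b) l).

Lemma pow_sum_app (b : nat) (l1 l2 : list nat) :
  pow_sum b (l1 ++ l2) = pow_sum b l1 + pow_sum b l2.
Proof. unfold pow_sum. now rewrite map_app, list_sum_app. Qed.

Lemma pow_sum_cons (b x : nat) (l : list nat) : pow_sum b (x :: l) = b ^ x + pow_sum b l.
Proof. reflexivity. Qed.

Lemma pow_le_pow_sum (b x : nat) (l : list nat) : In x l -> b ^ x <= pow_sum b l.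
Proof.
  induction l as [|y l IH]; [easy|].
  rewrite pow_sum_cons. intros [<-|Hx]; [lia|]. specialize (IH Hx). lia.
Qed.

Lemma pow_sum_eq0 (b : nat) (l : list nat) : 0 < b -> pow_sum b l = 0 -> l = [].
Proof.
  destruct l as [|x l]; [easy|]. intros Hb Hsum.
  pose proof (Nat.pow_nonzero b x ltac:(lia)). rewrite pow_sum_cons in Hsum. lia.
Qed.

Lemma pow_sum_le (b a : nat) (l : list nat) :
  0 < b -> Forall (fun x => x <= a) l -> pow_sum b l <= length l * b ^ a.
Proof.
  intros Hb Hl. induction Hl as [|x l Hx _ IH]; [easy|].
  rewrite pow_sum_cons. pose proof (Nat.pow_le_mono_r b x a ltac:(lia) Hx). simpl. lia.
Qed.

Lemma list_max_In (l : list nat) : l <> [] -> In (list_max l) l.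
Proof.
  induction l as [|x l IH]; [easy|]. intros _. cbn [list_max fold_right].
  destruct l as [|y l]; [cbn; left; lia|].
  fold (list_max (y :: l)).
  destruct (Nat.max_spec x (list_max (y :: l))) as [[_ ->]|[_ ->]].
  - right. now apply IH.
  - now left.
Qed.

Lemma pow_sum_bounds (b : nat) (l : list nat) :
  length l < b -> l <> [] ->
  b ^ list_max l <= pow_sum b l < b ^ S (list_max l).
Proof.
  intros Hlen Hl. split.
  - exact (pow_le_pow_sum b _ l (list_max_In l Hl)).
  - assert (Hle : pow_sum b l <= length l * b ^ list_max l).
    { apply pow_sum_le; [lia|]. now apply list_max_le. }
    rewrite Nat.pow_succ_r'. pose proof (Nat.pow_nonzero b (list_max l) ltac:(lia)).
    apply (Nat.le_lt_trans _ _ _ Hle), Nat.mul_lt_mono_pos_r; lia.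
Qed.

Lemma list_max_eq_of_pow_sum (b : nat) (l l' : list nat) :
  length l < b -> length l' < b -> l <> [] -> l' <> [] ->
  pow_sum b l = pow_sum b l' -> list_max l = list_max l'.
Proof.
  intros Hlen Hlen' Hl Hl' Hsum.
  assert (Hb : 1 < b) by (destruct l; [easy|]; simpl in Hlen; lia).
  pose proof (pow_sum_bounds b l Hlen Hl) as [Hlo Hhi].
  pose proof (pow_sum_bounds b l' Hlen' Hl') as [Hlo' Hhi'].
  assert (list_max l < S (list_max l')).
  { apply (Nat.pow_lt_mono_r_iff b); [easy|]. lia. }
  assert (list_max l' < S (list_max l)).
  { apply (Nat.pow_lt_mono_r_iff b); [easy|]. lia. }
  lia.
Qed.

Lemma pow_sum_Permutation (b : nat) (l l' : list nat) :
  length l < b -> length l' < b -> pow_sum b l = pow_sum b l' -> Permutation l l'.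
Proof.
  remember (length l) as n eqn:Hn. revert l l' Hn.
  induction n as [|n IH]; intros l l' Hn Hlen Hlen' Hsum.
  - destruct l; [|discriminate].
    rewrite (pow_sum_eq0 b l'); [constructor|lia|easy].
  - assert (Hl : l <> []) by (intros ->; discriminate).
    assert (Hl' : l' <> []) by (intros ->; apply Hl, (pow_sum_eq0 b); [lia|easy]).
    pose proof (list_max_In l Hl) as Hin.
    pose proof (list_max_In l' Hl') as Hin'.
    rewrite <- (list_max_eq_of_pow_sum b l l' ltac:(lia) Hlen' Hl Hl' Hsum) in Hin'.
    generalize dependent (list_max l); intros a Hin Hin'.
    destruct (in_split _ _ Hin) as (l1 & l2 & ->).
    destruct (in_split _ _ Hin') as (l1' & l2' & ->).
    apply Permutation_elt.
    rewrite !pow_sum_app, !pow_sum_cons in Hsum.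
    rewrite !length_app in *; simpl in *.
    apply IH; rewrite ?pow_sum_app, ?length_app; lia.
Qed.

Lemma pow_sum2_inj (b a c d f : nat) :
  2 < b -> b ^ a + b ^ c = b ^ d + b ^ f -> (a = d /\ c = f) \/ (a = f /\ c = d).
Proof.
  intros Hb Hsum.
  assert (Hperm : Permutation [a; c] [d; f]).
  { apply (pow_sum_Permutation b); [simpl; lia..|]. unfold pow_sum; simpl; lia. }
  destruct (Permutation_length_2_inv Hperm) as [Heq|Heq]; injection Heq; auto.
Qed.

Definition sidon (E : nat -> Prop) : Prop :=
  forall x y z w, E x -> E y -> E z -> E w -> x + y = z + w ->
  (x = z /\ y = w) \/ (x = w /\ y = z).

Definition pow_minus_one (b e : nat) : Prop := exists k, e = b ^ k - 1.

Lemma sidon_pow_minus_one (b : nat) : 2 < b -> sidon (pow_minus_one b).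
Proof.
  intros Hb x y z w [i ->] [j ->] [k ->] [l ->] Hsum.
  pose proof (Nat.pow_nonzero b i ltac:(lia)). pose proof (Nat.pow_nonzero b j ltac:(lia)).
  pose proof (Nat.pow_nonzero b k ltac:(lia)). pose proof (Nat.pow_nonzero b l ltac:(lia)).
  destruct (pow_sum2_inj b i j k l Hb ltac:(lia)) as [[-> ->]|[-> ->]]; auto.
Qed.

Lemma pow_minus_one_infinite (b : nat) : 1 < b -> infinite_set (pow_minus_one b).
Proof.
  intros Hb N. exists (b ^ S N - 1). split; [now exists (S N)|].
  pose proof (Nat.pow_gt_lin_r b (S N) Hb). lia.
Qed.

Definition pow_image (b : nat) (E : nat -> Prop) (n : nat) : Prop := exists e, E e /\ n = b ^ e.

Lemma pow_image_Npos (b : nat) (E : nat -> Prop) : 0 < b -> subset_Npos (pow_image b E).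
Proof. intros Hb m [e [_ ->]]. pose proof (Nat.pow_nonzero b e ltac:(lia)). lia. Qed.

Lemma pow_image_infinite (b : nat) (E : nat -> Prop) :
  1 < b -> infinite_set E -> infinite_set (pow_image b E).
Proof.
  intros Hb HE N. destruct (HE N) as [e [He HNe]].
  exists (b ^ e). split; [now exists e|].
  pose proof (Nat.pow_gt_lin_r b e Hb). lia.
Qed.

Lemma pow_image_card_ge3 (b : nat) (E : nat -> Prop) :
  1 < b -> card_ge3 E -> card_ge3 (pow_image b E).
Proof.
  intros Hb (x & y & z & Hx & Hy & Hz & Hxy & Hxz & Hyz).
  exists (b ^ x), (b ^ y), (b ^ z).
  assert (Hinj : forall u v, u <> v -> b ^ u <> b ^ v)
    by (intros u v Huv Heq; apply Huv, (Nat.pow_inj_r b); assumption).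
  repeat split; auto; [exists x | exists y | exists z]; auto.
Qed.

Lemma separating_equation_nat (m1 m2 m3 n1 n2 n3 : nat) :
  (Z.of_nat n2 * (Z.of_nat m3 - Z.of_nat m1)
     = Z.of_nat n1 * (Z.of_nat m3 - Z.of_nat m2) + Z.of_nat n3 * (Z.of_nat m2 - Z.of_nat m1))%Z
  <-> n2 * m3 + n1 * m2 + n3 * m1 = n1 * m3 + n2 * m1 + n3 * m2.
Proof.
  split; intros H.
  - apply Nat2Z.inj. rewrite !Nat2Z.inj_add, !Nat2Z.inj_mul. lia.
  - apply (f_equal Z.of_nat) in H. rewrite !Nat2Z.inj_add, !Nat2Z.inj_mul in H. lia.
Qed.

Lemma pow_image_pair_eq (b : nat) (E : nat -> Prop) (m1 m2 n1 n2 : nat) :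
  2 < b -> pow_image b E m1 -> pow_image b E m2 -> m1 <> m2 ->
  pow_image b E n1 -> pow_image b E n2 ->
  m1 + n2 = m2 + n1 -> (m1, m2) = (n1, n2).
Proof.
  intros Hb [e1 [_ ->]] [e2 [_ ->]] Hm [f1 [_ ->]] [f2 [_ ->]] Hsum.
  destruct (pow_sum2_inj b e1 f2 e2 f1 Hb Hsum) as [[-> _]|[-> ->]]; [easy|reflexivity].
Qed.

Section SidonExponents.

Variables (b : nat) (E : nat -> Prop).
Hypotheses (b_gt3 : 3 < b) (E_sidon : sidon E).

Lemma sidon_triple_eq (e1 e2 e3 f1 f2 f3 : nat) :
  E e1 -> E e2 -> E f1 -> E f2 ->
  e1 <> e3 -> e2 <> e3 -> f1 <> f2 -> f1 <> f3 ->
  Permutation [f2 + e3; f1 + e2; f3 + e1] [f1 + e3; f2 + e1; f3 + e2] ->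
  (e1, e2, e3) = (f1, f2, f3).
Proof.
  intros He1 He2 Hf1 Hf2 He13 He23 Hf12 Hf13 Hperm.
  assert (H23 : f2 + e3 = f3 + e2).
  { assert (Hin : In (f2 + e3) [f1 + e3; f2 + e1; f3 + e2])
      by (apply (Permutation_in _ Hperm); simpl; auto).
    simpl in Hin. lia. }
  assert (H12 : f1 + e2 = f2 + e1).
  { assert (Hin : In (f1 + e2) [f1 + e3; f2 + e1; f3 + e2])
      by (apply (Permutation_in _ Hperm); simpl; auto).
    simpl in Hin. lia. }
  destruct (E_sidon f1 e2 f2 e1 Hf1 He2 Hf2 He1 H12) as [[Hf _]|[-> ->]]; [easy|].
  f_equal; lia.
Qed.

Lemma pow_image_triple_eq (m1 m2 m3 n1 n2 n3 : nat) :
  pow_image b E m1 -> pow_image b E m2 -> pow_image b E m3 ->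
  m1 <> m3 -> m2 <> m3 ->
  pow_image b E n1 -> pow_image b E n2 -> pow_image b E n3 ->
  n1 <> n2 -> n1 <> n3 ->
  n2 * m3 + n1 * m2 + n3 * m1 = n1 * m3 + n2 * m1 + n3 * m2 ->
  (m1, m2, m3) = (n1, n2, n3).
Proof.
  intros [e1 [He1 ->]] [e2 [He2 ->]] [e3 [He3 ->]] Hm13 Hm23
    [f1 [Hf1 ->]] [f2 [Hf2 ->]] [f3 [Hf3 ->]] Hn12 Hn13 Hsum.
  rewrite <- !Nat.pow_add_r in Hsum.
  assert (Hperm : Permutation [f2 + e3; f1 + e2; f3 + e1] [f1 + e3; f2 + e1; f3 + e2]).
  { apply (pow_sum_Permutation b); [simpl; lia..|]. unfold pow_sum; simpl; lia. }
  assert (Hexp : (e1, e2, e3) = (f1, f2, f3)).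
  { apply sidon_triple_eq; auto; intros ->; auto. }
  now injection Hexp as -> -> ->.
Qed.

Lemma pow_image_strongly_three_separating :
  card_ge3 E -> strongly_three_separating (pow_image b E).
Proof.
  intros HE. split; [split|].
  - apply pow_image_card_ge3; [lia|easy].
  - intros m1 m2 m3 n1 n2 n3 Hm1 Hm2 Hm3 _ Hm13 Hm23 Hn1 Hn2 Hn3 Hn12 Hn13 _.
    rewrite separating_equation_nat. split.
    + now apply pow_image_triple_eq.
    + intros Heq. injection Heq as -> -> ->. ring.
  - intros m1 m2 n1 n2 Hm1 Hm2 Hm12 Hn1 Hn2 _. split.
    + intros Hsum. apply (pow_image_pair_eq b E); auto; lia.
    + intros Heq. injection Heq as -> ->. lia.
Qed.

End SidonExponents.

Theorem corollary2p5 :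
  exists M : nat -> Prop,
    subset_Npos M /\ infinite_set M /\ strongly_three_separating M /\ M 1%nat.
Proof.
  exists (pow_image 4 (pow_minus_one 4)).
  assert (Hcard : card_ge3 (pow_minus_one 4)).
  { exists 0, 3, 15. repeat split; [exists 0 | exists 1 | exists 2 | ..]; easy. }
  split; [|split; [|split]].
  - apply pow_image_Npos. lia.
  - apply pow_image_infinite, pow_minus_one_infinite; lia.
  - apply pow_image_strongly_three_separating; [lia|apply sidon_pow_minus_one; lia|easy].
  - exists 0. split; [now exists 0|reflexivity].
Qed.
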